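(* Let $\mathbf{P}$ be a $g$-regular $(K,F,Z,S)$ PDA with $g=KZ/F+1\ge 2$. Then $F\ge\binom{K}{KZ/F}$.
   Context: For positive integers $K,F,Z,S$ and an integer $g$, an $F\times K$ array $\mathbf{P}=[p_{j,k}]$ whose entries are either a special symbol $*$ or one of the integers $0,1,\dots,S-1$ is a $g$-regular $(K,F,Z,S)$ PDA if: (C1) the symbol $*$ appears exactly $Z$ times in each column; (C2') each integer in $\{0,\dots,S-1\}$ appears exactly $g$ times in $\mathbf{P}$; (C3) for any two distinct entries with $p_{j_1,k_1}=p_{j_2,k_2}=s$ an integer, we have $j_1\neq j_2$, $k_1\neq k_2$, and $p_{j_1,k_2}=p_{j_2,k_1}=*$. *)

From mathcomp Require Import all_boot all_order all_algebra.
Set Implicit Arguments. Unset Strict Implicit. Unset Printing Implicit Defensive.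

(* A PDA is an F x K array whose entries are either the star symbol [*],
   encoded as [None], or an integer s in {0,...,S-1}, encoded as [Some s]
   with s : 'I_S. *)
Definition pda_array (F K S : nat) := 'M[option 'I_S]_(F, K).

Definition is_g_regular_PDA (K F Z S g : nat) (P : pda_array F K S) : Prop :=
  (forall k : 'I_K, #|[set j : 'I_F | P j k == None]| = Z) /\
  (forall s : 'I_S,
      #|[set jk : 'I_F * 'I_K | P jk.1 jk.2 == Some s]| = g) /\
  (forall (j1 j2 : 'I_F) (k1 k2 : 'I_K) (s : 'I_S),
      (j1, k1) != (j2, k2) ->
      P j1 k1 = Some s -> P j2 k2 = Some s ->
      [/\ j1 != j2, k1 != k2, P j1 k2 = None & P j2 k1 = None]).
Arguments is_g_regular_PDA : clear implicits.

From mathcomp Require Import all_boot all_order all_algebra.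
Set Implicit Arguments. Unset Strict Implicit. Unset Printing Implicit Defensive.

(* Write t = KZ/F, so g = t + 1.  If row j carries an integer s, the other
   g - 1 = t cells holding s lie in distinct columns, and (C3) puts a star in
   row j in each of those columns; so every row has at least t stars.  The
   stars number KZ = tF in total, hence every row has exactly t stars, and the
   t columns just found are then all the stars of row j.  Exchanging a star
   column c of row j with a non-star column k (say P j k = s) then gives the
   star set of another row: the row r holding s in column c.  A family of
   t-subsets closed under single exchanges contains all t-subsets, so the F
   rows realise at least C(K, t) distinct star sets. *)

Lemma exchange_closed_sets (T : finType) (fam : {set {set T}}) (B0 : {set T}) :
  B0 \in fam ->
  (forall B c x, B \in fam -> c \in B -> x \notin B -> x |: (B :\ c) \in fam) ->
  forall A : {set T}, #|A| = #|B0| -> A \in fam.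
Proof.
move=> famB0 exch A cardA.
suff: forall n B, B \in fam -> #|A| = #|B| -> #|A :\: B| = n -> A \in fam.
  by apply; [exact: famB0 | exact: cardA |].
elim=> [|n IHn] B famB cardAB cardD.
  have subAB : A \subset B by rewrite -setD_eq0 -cards_eq0 cardD.
  suff -> : A = B by [].
  by apply/eqP; rewrite eqEcard subAB cardAB leqnn.
have /set0Pn[x] : A :\: B != set0 by rewrite -card_gt0 cardD.
rewrite inE => /andP[xB xA].
have /set0Pn[c] : B :\: A != set0.
  by rewrite -card_gt0 cardsD setIC -cardAB -cardsD cardD.
rewrite inE => /andP[cA cB].
apply: (IHn (x |: (B :\ c))); first exact: exch.
  by rewrite cardsU1 in_setD1 (negbTE xB) andbF cardAB (cardsD1 c B) cB.
have -> : A :\: (x |: (B :\ c)) = (A :\: B) :\ x.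
  apply/setP=> y; rewrite !inE.
  by case: (eqVneq y c) => [->|_]; [rewrite (negbTE cA) !andbF | case: (y == x)].
by move: cardD; rewrite (cardsD1 x) !inE xA xB => -[].
Qed.

Lemma card_set_sum_nat (T : finType) (p : pred T) :
  #|[set x | p x]| = \sum_x (p x : nat).
Proof.
rewrite -sum1_card big_mkcond /=.
by apply: eq_bigr => x _; rewrite inE; case: (p x).
Qed.

Lemma eq_lower_bound_sum (I : finType) (t : nat) (f : I -> nat) :
  (forall i, t <= f i) -> \sum_i f i = #|I| * t -> forall i, f i = t.
Proof.
move=> lb sum_f i; apply/esym/eqP.
have eq_sum : \sum_(i : I) t == \sum_i f i by rewrite sum_nat_const sum_f.
have /leqif_sum leq_sum : forall i, predT i -> t <= f i ?= iff (t == f i).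
  by move=> j _; apply: leqif_eq.
by move: eq_sum; rewrite leq_sum.2 => /forallP/(_ i).
Qed.

Section RegularPDA.

Variables (K F S g : nat) (P : pda_array F K S).

Definition star_row (j : 'I_F) := [set k | P j k == None].
Definition star_rows := [set star_row j | j : 'I_F].
Definition cells_of (s : 'I_S) := [set jk : 'I_F * 'I_K | P jk.1 jk.2 == Some s].

Lemma sum_card_star_row Z :
  (forall k : 'I_K, #|[set j : 'I_F | P j k == None]| = Z) ->
  \sum_j #|star_row j| = K * Z.
Proof.
move=> C1; under eq_bigr do rewrite card_set_sum_nat.
rewrite exchange_big /= -[K in K * Z]card_ord -sum_nat_const.
by apply: eq_bigr => k _; rewrite -(C1 k) card_set_sum_nat.
Qed.

Hypothesis C2 : forall s : 'I_S, #|cells_of s| = g.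
Hypothesis C3 : forall (j1 j2 : 'I_F) (k1 k2 : 'I_K) (s : 'I_S),
  (j1, k1) != (j2, k2) -> P j1 k1 = Some s -> P j2 k2 = Some s ->
  [/\ j1 != j2, k1 != k2, P j1 k2 = None & P j2 k1 = None].

Lemma cells_of_snd_inj s : {in cells_of s &, injective snd}.
Proof.
move=> [j1 k1] [j2 k2]; rewrite !inE /= => /eqP P1 /eqP P2 /= k12.
apply/eqP/negPn/negP => ne.
by case: (C3 ne P1 P2) => _ /eqP.
Qed.

Lemma leq_g_ncols (s : 'I_S) : g <= K.
Proof.
rewrite -(C2 s) -(card_in_imset (@cells_of_snd_inj s)).
by rewrite (leq_trans (max_card _)) ?card_ord.
Qed.

Definition other_cols j k s := [set jk.2 | jk in cells_of s :\ (j, k)].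

Lemma card_other_cols j k s : P j k = Some s -> #|other_cols j k s| = g.-1.
Proof.
move=> Pjk; rewrite card_in_imset; last first.
  by move=> x y /setD1P[_ xs] /setD1P[_ ys]; apply: cells_of_snd_inj xs ys.
by rewrite -(C2 s) (cardsD1 (j, k) (cells_of s)) inE /= Pjk eqxx.
Qed.

Lemma other_cols_sub_star_row j k s :
  P j k = Some s -> other_cols j k s \subset star_row j.
Proof.
move=> Pjk; apply/subsetP => x /imsetP[[r c] /setD1P[ne]].
rewrite inE /= => /eqP Prc ->.
by case: (C3 (j1 := j) (k1 := k) _ Pjk Prc) => [|_ _ Pjc _]; rewrite 1?eq_sym ?inE ?Pjc.
Qed.

Lemma leq_card_star_row (s0 : 'I_S) j : g.-1 <= #|star_row j|.
Proof.
case: (pickP [pred k | P j k != None]) => [k /= | no_int].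
  case Pjk: (P j k) => [s|] // _.
  by rewrite -(card_other_cols Pjk) subset_leq_card ?other_cols_sub_star_row.
have -> : star_row j = setT by apply/setP => k; rewrite !inE; move/negbFE: (no_int k).
by rewrite cardsT card_ord (leq_trans (leq_pred g)) ?leq_g_ncols.
Qed.

Hypothesis card_star_row : forall j, #|star_row j| = g.-1.

Lemma other_cols_star_row j k s : P j k = Some s -> other_cols j k s = star_row j.
Proof.
move=> Pjk; apply/eqP.
by rewrite eqEcard other_cols_sub_star_row //= card_star_row card_other_cols.
Qed.

Lemma other_colsP j k s c : c \in other_cols j k s -> exists r, P r c = Some s.
Proof. by case/imsetP=> [[r c'] /setD1P[_]]; rewrite inE /= => /eqP Prc ->; exists r. Qed.

Lemma star_row_exchange j c k : c \in star_row j -> k \notin star_row j ->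
  exists r, star_row r = k |: (star_row j :\ c).
Proof.
move=> cj kj; case Pjk: (P j k) => [s|]; last by rewrite inE Pjk in kj.
have /other_colsP[r Prc] : c \in other_cols j k s by rewrite other_cols_star_row.
exists r; apply/esym/eqP; rewrite eqEcard; apply/andP; split.
  apply/subsetP => x; rewrite in_setU1 => /predU1P[-> | /setD1P[xc xj]].
    have kc : k != c by apply: contraNneq kj => ->.
    case: (C3 (j1 := r) (k1 := c) _ Prc Pjk) => [|_ _ Prk _]; last by rewrite inE Prk.
    by rewrite xpair_eqE (eq_sym c) (negbTE kc) andbF.
  have /other_colsP[r' Pr'x] : x \in other_cols j k s by rewrite other_cols_star_row.
  case: (C3 (j1 := r) (k1 := c) _ Prc Pr'x) => [|_ _ Prx _]; last by rewrite inE Prx.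
  by rewrite xpair_eqE (eq_sym c) (negbTE xc) andbF.
rewrite (card_star_row r) -(card_star_row j) cardsU1 in_setD1 (negbTE kj) andbF.
by rewrite (cardsD1 c (star_row j)) cj.
Qed.

Lemma star_rows_exchange_closed :
  forall B c x, B \in star_rows -> c \in B -> x \notin B ->
  x |: (B :\ c) \in star_rows.
Proof.
move=> _ c x /imsetP[j _ ->] cj xj.
by have [r <-] := star_row_exchange cj xj; apply: imset_f.
Qed.

Lemma binomial_leq_nrows (j0 : 'I_F) : 'C(K, g.-1) <= F.
Proof.
have star_row_j0 : star_row j0 \in star_rows by apply: imset_f.
have all_star_rows : [set A : {set 'I_K} | #|A| == g.-1] \subset star_rows.
  apply/subsetP => A; rewrite inE => /eqP cardA.
  apply: (exchange_closed_sets star_row_j0 star_rows_exchange_closed).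
  by rewrite cardA card_star_row.
rewrite -[K in 'C(K, _)]card_ord -card_draws.
by rewrite (leq_trans (subset_leq_card all_star_rows)) // -[F]card_ord leq_imset_card.
Qed.

End RegularPDA.

Theorem theorem3 (K F Z S g : nat) (P : pda_array F K S) :
  0 < K -> 0 < F -> 0 < Z -> 0 < S ->
  is_g_regular_PDA K F Z S g P ->
  (F %| K * Z)%N ->
  g = (K * Z %/ F).+1 ->
  2 <= g ->
  'C(K, K * Z %/ F) <= F.
Proof.
move=> _ F_gt0 _ S_gt0 [C1 [C2 C3]] FdvdKZ g_def _.
have card_star_row : forall j, #|star_row P j| = g.-1.
  apply: eq_lower_bound_sum => [j|].
    exact: (leq_card_star_row C2 C3 (Ordinal S_gt0)).
  by rewrite (sum_card_star_row C1) card_ord g_def [RHS]mulnC (divnK FdvdKZ).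
have := binomial_leq_nrows C2 C3 card_star_row (Ordinal F_gt0).
by rewrite g_def.
Qed.
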